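(* Let $\mathcal H=\{h_1,\dots,h_k\}$ be an admissible set of $k\ge2$ distinct integers with $|h_i|\le h$ for all $i$. Then \[ 1\ll\beta(\mathcal H)\ll \log\log 10h, \] and there is a constant $b_k$ depending only on $k$ such that \[ \mathfrak S(\mathcal H)\ll(\log\log 10h)^{b_k}. \] The implied constants depend only on $k$.
   Context: For a prime $p$, $\nu_p$ is the number of distinct residue classes mod $p$ containing an element of $\mathcal H$. The set $\mathcal H$ is admissible if $\nu_p<p$ for all primes $p$. Define \[ \beta(\mathcal H)=\sum_p\frac{(k-\nu_p)\log p}{p},\qquad \mathfrak S(\mathcal H)=\prod_p\Big(1-\frac{\nu_p}{p}\Big)\Big(1-\frac1p\Big)^{-k}. \] *)

From HB Require Import structures.
From mathcomp Require Import all_boot all_order all_algebra.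
From mathcomp Require Import all_classical all_reals all_analysis.
Set Implicit Arguments. Unset Strict Implicit. Unset Printing Implicit Defensive.
Import Order.TTheory GRing.Theory Num.Theory numFieldNormedType.Exports.
Local Open Scope ring_scope.

Definition nu (H : seq int) (p : nat) : nat :=
  size (undup [seq (x %% p%:Z)%Z | x <- H]).

Definition admissible (H : seq int) : Prop :=
  forall p : nat, prime p -> (nu H p < p)%N.

Definition beta_partial (R : realType) (H : seq int) (N : nat) : R :=
  \sum_(p < N | prime p) (((size H - nu H p)%N)%:R * ln (p%:R : R) / p%:R).

Definition beta (R : realType) (H : seq int) : R := limn (beta_partial R H).

Definition sing_partial (R : realType) (H : seq int) (N : nat) : R :=
  \prod_(p < N | prime p)
     ((1 - (nu H p)%:R / p%:R) * (1 - (p%:R : R)^-1) ^- (size H)).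

Definition singular_series (R : realType) (H : seq int) : R :=
  limn (sing_partial R H).

(* Let D be the product of the nonzero differences of elements of H, so that
   D <= (2h)^(k^2).  A prime p not dividing D separates the elements of H, so
   nu_p = k: the p-th term of beta vanishes and, by Bernoulli's inequality, the
   p-th Euler factor of the singular series is at most 1.  Hence beta is a
   finite sum over the primes dividing D, and the singular series is bounded by
   its partial product up to D, hence by exp(2k sum_{p | D} 1/p).  Splitting
   the primes dividing D at L ~ log D, the Mertens-type bound
   sum_{p <= n} log p / p <= 2 log n (from prod_{p <= n} p^(n/p) | n!) and
   partial summation give beta << log L and sum_{p | D} 1/p <= 2 log log L + O(1),
   while log L << log log 10h.  The lower bound on beta comes from p = 2 alone,
   since nu_2 <= 1 < k. *)

From HB Require Import structures.
From mathcomp Require Import all_boot all_order all_algebra.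
From mathcomp Require Import all_classical all_reals all_analysis.
From mathcomp Require Import ring lra zify.
Import Order.TTheory GRing.Theory Num.Theory numFieldNormedType.Exports.
Set Implicit Arguments.
Unset Strict Implicit.
Unset Printing Implicit Defensive.
Local Open Scope ring_scope.

Lemma bernoulli_ineq (R : realDomainType) (x : R) n :
  -1 <= x -> 1 + n%:R * x <= (1 + x) ^+ n.
Proof.
move=> x_ge; have x1_ge0 : 0 <= 1 + x by lra.
elim: n => [|n IH]; first by rewrite mul0r addr0 expr0.
have := ler_wpM2l x1_ge0 IH; rewrite -exprS.
have : 0 <= n%:R * x * x by rewrite -mulrA mulr_ge0 // -expr2 sqr_ge0.
rewrite -natr1; nra.
Qed.

Section RealFacts.
Variable R : realType.

Lemma ln_ge1BV (x : R) : 0 < x -> 1 - x^-1 <= ln x.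
Proof.
move=> x_gt0; have : -1 < x^-1 - 1 by rewrite ltrBrDr addrC subrr invr_gt0.
move=> /le_ln1Dx; rewrite addrC subrK lnV ?posrE //; lra.
Qed.

Lemma ln2_bounds : 1/2 <= ln (2 : R) <= 1.
Proof.
apply/andP; split; first by have := @ln_ge1BV 2 ltac:(lra); lra.
by have := @le_ln1Dx R 1 ltac:(lra); rewrite (_ : 1 + 1 = 2).
Qed.

Lemma ln10_gt1 : 1 < ln (10 : R).
Proof.
have -> : (10 : R) = 2 * 5 by rewrite -natrM.
rewrite lnM ?posrE //; have /andP[ln2_ge _] := ln2_bounds.
by have := @ln_ge1BV 5 ltac:(lra); lra.
Qed.

Lemma ln_prod (I : Type) (r : seq I) (P : pred I) (f : I -> R) :
  (forall i, P i -> 0 < f i) ->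
  ln (\prod_(i <- r | P i) f i) = \sum_(i <- r | P i) ln (f i).
Proof.
move=> f_gt0; elim: r => [|a r IH]; first by rewrite !big_nil ln1.
rewrite !big_cons; case: ifP => Pa //.
by rewrite lnM ?IH ?posrE ?f_gt0 ?prodr_gt0.
Qed.

Lemma sub_ler_sum_nat (N N' : nat) (P Q : pred nat) (F : nat -> R) :
  (forall i, (i < N)%N -> P i -> (i < N')%N && Q i) ->
  (forall i, (i < N')%N -> Q i -> 0 <= F i) ->
  \sum_(0 <= i < N | P i) F i <= \sum_(0 <= i < N' | Q i) F i.
Proof.
move=> PQ F_ge0.
rewrite (big_nat_widen 0 N (maxn N N')) ?leq_maxl //.
rewrite [X in _ <= X](big_nat_widen 0 N' (maxn N N')) ?leq_maxr //.
rewrite big_mkcond [X in _ <= X]big_mkcond /=.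
apply: ler_sum_nat => i _.
case Pi: (P i); case iN: (i < N)%N => /=.
- by move: (PQ i iN Pi) => /andP[-> ->].
all: by case: ifP => // /andP[iN' Qi]; apply: F_ge0.
Qed.

End RealFacts.

Lemma dvdn_prod_prime_powers (N m : nat) (e : nat -> nat) (P : pred nat) :
  (forall p, P p -> prime p) -> (forall p, (p < N)%N -> P p -> p ^ e p %| m)%N ->
  (\prod_(0 <= p < N | P p) p ^ e p %| m)%N.
Proof.
move=> P_prime dvd_m; apply/unstable.Gauss_dvd_prod => [|p]; last first.
  by rewrite mem_index_iota => /andP[_]; apply: dvd_m.
have lt_s : pairwise ltn [seq p <- index_iota 0 N | P p].
  by rewrite -sorted_pairwise ?sorted_filter ?iota_ltn_sorted //; exact: ltn_trans.
rewrite pairwise_map; apply: (@sub_in_pairwise _ prime) lt_s.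
  move=> p q p_pr q_pr /= pq.
  by rewrite coprimeXl // coprimeXr // prime_coprime // dvdn_prime2 // ltn_eqF.
by apply/allP => p; rewrite mem_filter => /andP[/P_prime].
Qed.

Lemma fact_le_expn n : (n`! <= n ^ n)%N.
Proof.
elim: n => // n IH; rewrite factS expnS leq_mul //.
by apply: (leq_trans IH); case: n {IH} => // n; rewrite leq_exp2r.
Qed.

Lemma prod_prime_expn_divn_dvd_fact n :
  (\prod_(0 <= p < n.+1 | prime p) p ^ (n %/ p) %| n`!)%N.
Proof.
apply: dvdn_prod_prime_powers => // p _ p_pr.
rewrite pfactor_dvdn ?fact_gt0 // logn_fact //.
by case: n => [|n]; rewrite ?div0n // big_ltn // expn1 leq_addr.
Qed.

Definition cutoff (D : nat) : nat := (trunc_log 2 D).+2.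

Section PrimeSums.
Variable R : realType.

Definition mertens_sum (N : nat) : R :=
  \sum_(0 <= p < N.+1 | prime p) ln (p%:R : R) / p%:R.

Definition prime_recip_sum (N : nat) : R :=
  \sum_(0 <= p < N.+1 | prime p) (p%:R : R)^-1.

Lemma ln_prime_ge0 p : prime p -> 0 <= ln (p%:R : R).
Proof. by move=> p_pr; rewrite ln_ge0 // ler1n prime_gt0. Qed.

Lemma mertens_sum_ge0 N : 0 <= mertens_sum N.
Proof. by apply: sumr_ge0 => p p_pr; rewrite divr_ge0 ?ln_prime_ge0. Qed.

Lemma sum_divn_ln_prime_le n :
  \sum_(0 <= p < n.+1 | prime p) (n %/ p)%:R * ln (p%:R : R) <= n%:R * ln (n%:R : R).
Proof.
have [->|n_gt0] := posnP n; first by rewrite mul0r big1 // => p _; rewrite div0n mul0r.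
have prod_gt0 : (0 < \prod_(0 <= p < n.+1 | prime p) p ^ (n %/ p))%N.
  by rewrite prodn_cond_gt0 // => p /prime_gt0 p_gt0; rewrite expn_gt0 p_gt0.
rewrite mulr_natl -lnXn ?ltr0n //.
rewrite (eq_bigr (fun p => ln ((p%:R : R) ^+ (n %/ p)))); last first.
  by move=> p /prime_gt0 p_gt0; rewrite lnXn ?ltr0n // mulr_natl.
rewrite -ln_prod => [|p /prime_gt0 p_gt0]; last by rewrite exprn_gt0 ?ltr0n.
rewrite -natrX (eq_bigr (fun p => (p ^ (n %/ p))%:R)) => [|p _]; last by rewrite natrX.
rewrite -natr_prod ler_ln ?posrE ?ltr0n ?expn_gt0 ?n_gt0 // ler_nat.
apply: leq_trans (fact_le_expn n).
by apply: dvdn_leq (fact_gt0 n) _; exact: prod_prime_expn_divn_dvd_fact.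
Qed.

Lemma mertens_sum_le n : (1 <= n)%N -> mertens_sum n <= 2 * ln (n%:R : R).
Proof.
move=> n_ge1; have n_gt0 : (0 : R) < n%:R by rewrite ltr0n.
have -> : 2 * ln (n%:R : R) = 2 / n%:R * (n%:R * ln n%:R).
  by rewrite mulrA divfK ?lt0r_neq0.
have c_ge0 : 0 <= 2 / n%:R :> R by rewrite divr_ge0 ?ler0n.
apply: (le_trans _ (ler_wpM2l c_ge0 (sum_divn_ln_prime_le n))).
rewrite /mertens_sum mulr_sumr big_nat_cond [X in _ <= X]big_nat_cond.
apply: ler_sum => p /andP[/andP[_ p_le] p_pr].
have p_gt0 := prime_gt0 p_pr.
have n_le : (n%:R : R) <= 2 * (n %/ p)%:R * p%:R.
  suff : (n <= 2 * (n %/ p) * p)%N by rewrite -(ler_nat R) !natrM.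
  rewrite -mulnA mul2n -addnn {1}(divn_eq n p) leq_add2l.
  apply: leq_trans (ltnW (ltn_pmod n p_gt0)) _.
  by rewrite leq_pmull // divn_gt0.
have -> : 2 / n%:R * ((n %/ p)%:R * ln (p%:R : R)) =
    ln (p%:R : R) * (2 * (n %/ p)%:R / n%:R) by ring.
rewrite ler_wpM2l ?ln_prime_ge0 // ler_pdivlMr // mulrC ler_pdivrMr ?ltr0n //.
Qed.

Lemma mertens_sumS N : mertens_sum N.+1 =
  mertens_sum N + (if prime N.+1 then ln (N.+1%:R : R) / N.+1%:R else 0).
Proof. by rewrite /mertens_sum big_mkcond big_nat_recr //= -big_mkcond. Qed.

Lemma prime_recip_sumS N : prime_recip_sum N.+1 =
  prime_recip_sum N + (if prime N.+1 then (N.+1%:R : R)^-1 else 0).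
Proof. by rewrite /prime_recip_sum big_mkcond big_nat_recr //= -big_mkcond. Qed.

Lemma div_ln_sub_le (A x y : R) : 1 < x -> x <= y -> 0 <= A <= 2 * ln x ->
  A / ln x - A / ln y <= 2 * (ln (ln y) - ln (ln x)).
Proof.
move=> x_gt1 le_xy /andP[A_ge0 A_le].
have lnx_gt0 : 0 < ln x by rewrite ln_gt0.
have lny_gt0 : 0 < ln y by rewrite ln_gt0 //; lra.
have lnx_le : ln x <= ln y by rewrite ler_ln ?posrE //; lra.
have d_ge0 : 0 <= (ln y - ln x) / (ln x * ln y).
  by apply: divr_ge0; [lra | apply: mulr_ge0; lra].
have -> : A / ln x - A / ln y = A * ((ln y - ln x) / (ln x * ln y)).
  by field; rewrite !lt0r_neq0.
apply: (le_trans (ler_wpM2r d_ge0 A_le)).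
have -> : 2 * ln x * ((ln y - ln x) / (ln x * ln y)) = 2 * (1 - (ln y / ln x)^-1).
  by field; rewrite !lt0r_neq0.
by rewrite ler_wpM2l // -ln_div ?posrE // ln_ge1BV ?divr_gt0.
Qed.

Lemma prime_recip_sum_le_abel N : (2 <= N)%N ->
  prime_recip_sum N <= mertens_sum N / ln N%:R + 2 * (ln (ln N%:R) - ln (ln 2)).
Proof.
move=> /subnK <-; elim: (N - 2)%N => [|m IH].
  rewrite /prime_recip_sum /mertens_sum big_mkcond [X in _ <= X / _ + _]big_mkcond.
  rewrite !big_nat_recr //= !big_nil subrr mulr0 addr0 !add0r.
  by rewrite add0n addr0 mulrAC divff ?mul1r // lt0r_neq0 // ln_gt0 // ltr1n.
rewrite addSn mertens_sumS prime_recip_sumS.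
set x : R := (m + 2)%:R; set y : R := (m + 2).+1%:R.
have x_gt1 : 1 < x by rewrite ltr1n addn2.
have lny_gt0 : 0 < ln y by rewrite ln_gt0 // ltr1n addn2.
have le_xy : x <= y by rewrite ler_nat.
have A_bd : 0 <= mertens_sum (m + 2) <= 2 * ln x.
  by rewrite mertens_sum_ge0 mertens_sum_le // addn2.
have := div_ln_sub_le x_gt1 le_xy A_bd.
have -> : (if prime (m + 2).+1 then y^-1 else 0) =
    (if prime (m + 2).+1 then ln y / y else 0) / ln y.
  by case: ifP; rewrite ?mul0r // mulrAC divff ?mul1r // lt0r_neq0.
rewrite mulrDl; lra.
Qed.

Lemma prime_recip_sum_le N : (2 <= N)%N ->
  prime_recip_sum N <= 2 + 2 * (ln (ln N%:R) - ln (ln (2 : R))).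
Proof.
move=> N_ge2; apply: (le_trans (prime_recip_sum_le_abel N_ge2)); rewrite lerD2r.
have lnN_gt0 : 0 < ln (N%:R : R) by rewrite ln_gt0 // ltr1n.
by rewrite ler_pdivrMr // mertens_sum_le //; lia.
Qed.

Lemma sum_ln_prime_dvd_le (D N : nat) : (0 < D)%N ->
  \sum_(0 <= p < N | prime p && (p %| D)%N) ln (p%:R : R) <= ln D%:R.
Proof.
move=> D_gt0.
have prod_dvd : (\prod_(0 <= p < N | prime p && (p %| D)%N) p ^ 1 %| D)%N.
  by apply: dvdn_prod_prime_powers => [p /andP[] | p _ /andP[_]] //; rewrite expn1.
rewrite -ln_prod => [|p /andP[/prime_gt0 p_gt0 _]]; last by rewrite ltr0n.
rewrite -natr_prod ler_ln ?posrE ?ltr0n ?prodn_cond_gt0 // => [|p /andP[/prime_gt0]] //.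
rewrite ler_nat (eq_bigr (fun p => p ^ 1))%N => [|p _]; last by rewrite expn1.
exact: dvdn_leq.
Qed.

Lemma sum_prime_dvd_split (w : nat -> R) (D N L : nat) :
  (0 < L)%N -> (forall p, prime p -> 0 <= w p) ->
  \sum_(0 <= p < N | prime p && (p %| D)%N) w p / p%:R <=
  \sum_(0 <= p < L.+1 | prime p) w p / p%:R +
  (\sum_(0 <= p < N | prime p && (p %| D)%N) w p) / L%:R.
Proof.
move=> L_gt0 w_ge0; rewrite mulr_suml.
apply: (@le_trans _ _ (\sum_(0 <= p < N | prime p && (p %| D)%N)
    ((if (p <= L)%N then w p / p%:R else 0) + w p / L%:R))).
  apply: ler_sum => p /andP[p_pr _]; have p_gt0 := prime_gt0 p_pr.
  case: leqP => [_ | L_lt]; first by rewrite lerDl divr_ge0 ?w_ge0.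
  by rewrite add0r ler_wpM2l ?w_ge0 // lef_pV2 ?posrE ?ltr0n // ler_nat ltnW.
rewrite big_split -big_mkcondr lerD2r /=.
apply: sub_ler_sum_nat => [p _ /andP[/andP[p_pr _] p_le] | p _ p_pr].
  by rewrite ltnS p_le.
by rewrite divr_ge0 ?w_ge0.
Qed.

Lemma ln_le_cutoff D : (0 < D)%N -> ln (D%:R : R) <= (cutoff D)%:R * ln 2.
Proof.
move=> D_gt0; have D_lt : (D < 2 ^ cutoff D)%N.
  by apply: (leq_trans (trunc_log_ltn D (ltnSn 1))); rewrite leq_exp2l.
rewrite mulr_natl -lnXn // ler_ln ?posrE ?ltr0n ?exprn_gt0 //.
by rewrite -natrX ler_nat ltnW.
Qed.

Lemma cutoff_le D : (0 < D)%N -> ((cutoff D)%:R : R) <= 2 * ln D%:R + 2.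
Proof.
move=> D_gt0; have pow_le : (2 ^ trunc_log 2 D <= D)%N by apply: trunc_logP.
have log_le : (trunc_log 2 D)%:R * ln (2 : R) <= ln D%:R.
  rewrite mulr_natl -lnXn // ler_ln ?posrE ?ltr0n ?exprn_gt0 //.
  by rewrite -natrX ler_nat.
have /andP[ln2_ge ln2_le] := ln2_bounds R.
have : 0 <= ((trunc_log 2 D)%:R : R) by [].
rewrite /cutoff -addn2 natrD; nra.
Qed.

Lemma sum_ln_div_prime_dvd_le D N : (0 < D)%N ->
  \sum_(0 <= p < N | prime p && (p %| D)%N) ln (p%:R : R) / p%:R <=
  2 * ln (cutoff D)%:R + ln 2.
Proof.
move=> D_gt0; have L_gt0 : (0 : R) < (cutoff D)%:R by rewrite ltr0n.
apply: (le_trans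
  (@sum_prime_dvd_split (fun p => ln p%:R) D N (cutoff D) isT ln_prime_ge0)).
apply: lerD; first exact: mertens_sum_le.
rewrite ler_pdivrMr // mulrC; apply: le_trans (ln_le_cutoff D_gt0).
exact: sum_ln_prime_dvd_le.
Qed.

Lemma sum_inv_prime_dvd_le D N : (0 < D)%N ->
  \sum_(0 <= p < N | prime p && (p %| D)%N) (p%:R : R)^-1 <=
  3 + 2 * (ln (ln (cutoff D)%:R) - ln (ln (2 : R))).
Proof.
move=> D_gt0; have L_gt0 : (0 : R) < (cutoff D)%:R by rewrite ltr0n.
have /andP[ln2_ge _] := ln2_bounds R.
under eq_bigr do rewrite -div1r.
apply: (le_trans
  (@sum_prime_dvd_split (fun=> 1) D N (cutoff D) isT (fun _ _ => ler01))).
apply: (@le_trans _ _ ((2 + 2 * (ln (ln (cutoff D)%:R) - ln (ln 2))) + 1)); last lra.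
apply: lerD.
  by under eq_bigr do rewrite div1r; apply: prime_recip_sum_le.
have ln2_gt0 : (0 : R) < ln 2 by lra.
rewrite ler_pdivrMr // mul1r; apply: (@le_trans _ _ (ln D%:R / ln 2)).
  rewrite ler_pdivlMr //.
  rewrite mulr_suml; apply: le_trans (sum_ln_prime_dvd_le N D_gt0).
  apply: ler_sum => p /andP[/prime_gt1 p_gt1 _].
  by rewrite mul1r ler_ln ?posrE ?(ler_nat R 2) ?ltr0n // ltnW.
by rewrite ler_pdivrMr ?ln_le_cutoff.
Qed.

End PrimeSums.

Definition diff_prod (H : seq int) : nat :=
  \prod_(x <- H) \prod_(y <- H) maxn 1 `|x - y|%N.

Lemma diff_prod_gt0 H : (0 < diff_prod H)%N.
Proof. by apply: prodn_gt0 => x; apply: prodn_gt0 => y; rewrite leq_max. Qed.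

Lemma dvdn_diff_prod H x y :
  x \in H -> y \in H -> x != y -> (`|x - y| %| diff_prod H)%N.
Proof.
move=> xH yH neq_xy; rewrite /diff_prod (big_rem x xH) /= dvdn_mulr //.
by rewrite (big_rem y yH) /= dvdn_mulr // (maxn_idPr _) // absz_gt0 subr_eq0.
Qed.

Lemma nu_eq_size H p :
  uniq H -> prime p -> ~~ (p %| diff_prod H)%N -> nu H p = size H.
Proof.
move=> uH p_pr p_ndvd; rewrite /nu undup_id ?size_map // map_inj_in_uniq //.
move=> x y xH yH eq_mod; apply/eqP; apply: contraNT p_ndvd => neq_xy.
have : (p%:Z %| x - y)%Z by rewrite -eqz_mod_dvd eq_mod.
by rewrite dvdzE => /dvdn_trans; apply; apply: dvdn_diff_prod.
Qed.

Lemma diff_prod_le (R : realType) (H : seq int) (h : R) : 1 <= h ->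
  (forall x, x \in H -> (`|x|%:~R : R) <= h) ->
  ((diff_prod H)%:R : R) <= (2 * h) ^+ (size H * size H).
Proof.
move=> h_ge1 H_le.
have prod_const (c : R) : \prod_(z <- H) c = c ^+ size H.
  by rewrite big_const_seq count_predT iter_mulr_1.
rewrite /diff_prod natr_prod exprM -!prod_const big_seq [X in _ <= X]big_seq.
apply: ler_prod => x xH; rewrite natr_prod prodr_ge0 //= big_seq [X in _ <= X]big_seq.
apply: ler_prod => y yH; rewrite ler0n /=.
have [|lt1] := leqP `|x - y|%N 1; first lra.
rewrite natr_absz intr_norm intrB (le_trans (ler_normB _ _)) //.
by have := H_le x xH; have := H_le y yH; rewrite !intr_norm; lra.
Qed.

Lemma nonincreasing_from_cvgn_le (R : realType) (u : R ^nat) N :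
  (forall n, (N <= n)%N -> u n.+1 <= u n) -> (forall n, 0 <= u n) ->
  cvgn u /\ limn u <= u N.
Proof.
move=> u_ni u_ge0; pose v n := u (n + N)%N.
have v_ni : nonincreasing_seq v.
  by apply/nonincreasing_seqP => n; rewrite /v addSn u_ni // leq_addl.
have v_cvg : cvgn v.
  by apply: nonincreasing_is_cvgn v_ni _; exists 0 => _ [n _ <-]; exact: u_ge0.
have u_to : (u @ \oo --> limn v)%classic by rewrite -(cvg_shiftn N).
split; first exact: cvgP u_to.
by rewrite (cvg_lim _ u_to) //; exact: (nonincreasing_cvgn_ge v_ni v_cvg 0).
Qed.

Section AdmissibleSet.
Variables (R : realType) (H : seq int).
Hypotheses (H_uniq : uniq H) (H_adm : admissible H).

Local Notation D := (diff_prod H).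
Local Notation k := (size H).

Definition beta_term (p : nat) : R := (k - nu H p)%N%:R * ln (p%:R : R) / p%:R.

Lemma beta_partialE N :
  beta_partial R H N = \sum_(0 <= p < N | prime p) beta_term p.
Proof. by rewrite /beta_partial big_mkord. Qed.

Lemma beta_term_ge0 p : prime p -> 0 <= beta_term p.
Proof. by move=> p_pr; rewrite divr_ge0 ?mulr_ge0 ?ln_prime_ge0. Qed.

Lemma beta_term_eq0 p : prime p -> ~~ (p %| D)%N -> beta_term p = 0.
Proof. by move=> p_pr p_ndvd; rewrite /beta_term nu_eq_size // subnn !mul0r. Qed.

Lemma beta_partial_stable n :
  (D < n)%N -> beta_partial R H n = beta_partial R H D.+1.
Proof.
move=> D_lt; rewrite !beta_partialE (big_cat_nat (leq0n D.+1) D_lt) /=.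
rewrite [X in _ + X]big_nat_cond [X in _ + X]big1 ?addr0 //.
move=> p /andP[/andP[D_lt_p _] p_pr].
by rewrite beta_term_eq0 // gtnNdvd ?diff_prod_gt0.
Qed.

Lemma beta_eq_partial : beta R H = beta_partial R H D.+1.
Proof.
by apply: lim_near_cst => //; exists D.+1 => // n; apply: beta_partial_stable.
Qed.

Lemma beta_ge : (2 <= k)%N -> ln 2 / 2 <= beta R H.
Proof.
move=> k_ge2; have D_lt : (D < D.+3)%N by rewrite ltnS leqW.
rewrite beta_eq_partial -(beta_partial_stable D_lt) beta_partialE big_mkcond.
rewrite (bigD1_seq 2) ?mem_index_iota ?iota_uniq //=.
apply: (@le_trans _ _ (beta_term 2)).
  have nu2_lt : (nu H 2 < 2)%N by exact: H_adm.
  have c_ge1 : (1 : R) <= (k - nu H 2)%N%:R by rewrite ler1n; lia.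
  have ln2_ge0 : (0 : R) <= ln 2 by exact: ln_prime_ge0.
  rewrite /beta_term; nra.
by rewrite lerDl sumr_ge0 // => p _; case: ifP => // /beta_term_ge0.
Qed.

Lemma beta_le_cutoff : beta R H <= k%:R * (2 * ln (cutoff D)%:R + ln 2).
Proof.
rewrite beta_eq_partial beta_partialE.
apply: (@le_trans _ _ (k%:R *
    \sum_(0 <= p < D.+1 | prime p && (p %| D)%N) ln (p%:R : R) / p%:R)).
  rewrite mulr_sumr big_mkcondr; apply: ler_sum => p p_pr.
  case: ifP => [_ | /negbT p_ndvd]; last by rewrite beta_term_eq0.
  rewrite /beta_term -mulrA ler_wpM2r ?ler_nat ?leq_subr //.
  by rewrite divr_ge0 ?ln_prime_ge0.
by rewrite ler_wpM2l // sum_ln_div_prime_dvd_le // diff_prod_gt0.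
Qed.

Definition sing_factor (p : nat) : R :=
  (1 - (nu H p)%:R / p%:R) * (1 - (p%:R : R)^-1) ^- k.

Lemma sing_partialE N :
  sing_partial R H N = \prod_(0 <= p < N | prime p) sing_factor p.
Proof. by rewrite /sing_partial big_mkord. Qed.

Lemma sing_partialS N : sing_partial R H N.+1 =
  sing_partial R H N * (if prime N then sing_factor N else 1).
Proof. by rewrite !sing_partialE big_mkcond big_nat_recr //= -big_mkcond. Qed.

Lemma subr1_inv_prime_gt0 p : prime p -> (0 : R) < 1 - (p%:R)^-1.
Proof.
move=> /prime_gt1 p_gt1; rewrite subr_gt0 invf_lt1 ?ltr1n //.
by rewrite ltr0n ltnW.
Qed.

Lemma sing_factor_gt0 p : prime p -> 0 < sing_factor p.
Proof.
move=> p_pr; have p_gt0 : (0 : R) < p%:R by rewrite ltr0n prime_gt0.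
rewrite mulr_gt0 ?invr_gt0 ?exprn_gt0 ?subr1_inv_prime_gt0 //.
by rewrite subr_gt0 ltr_pdivrMr // mul1r ltr_nat H_adm.
Qed.

Lemma sing_factor_le1 p : prime p -> ~~ (p %| D)%N -> sing_factor p <= 1.
Proof.
move=> p_pr p_ndvd; have p_gt0 : (0 : R) < p%:R by rewrite ltr0n prime_gt0.
rewrite /sing_factor nu_eq_size // ler_pdivrMr ?exprn_gt0 ?subr1_inv_prime_gt0 //.
have x_ge : -1 <= - (p%:R : R)^-1 by rewrite lerN2 invf_le1 // ler1n prime_gt0.
by have := bernoulli_ineq k x_ge; rewrite mul1r mulrN.
Qed.

Lemma sing_factor_le_expR p : prime p -> sing_factor p <= expR (k%:R * (2 / p%:R)).
Proof.
move=> p_pr; have p_ge2 : (2 : R) <= p%:R by rewrite (ler_nat R 2) prime_gt1.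
have inv_gt0 := subr1_inv_prime_gt0 p_pr.
have inv_le : (1 - (p%:R : R)^-1)^-1 <= expR (2 / p%:R).
  apply: le_trans (expR_ge1Dx _).
  have -> : (1 - (p%:R : R)^-1)^-1 = 1 + (p%:R - 1)^-1.
    by field; apply/andP; split; apply/negP => /eqP; lra.
  rewrite lerD2l ler_pdivlMr; last lra.
  by rewrite mulrC ler_pdivrMr ?ltr0n ?prime_gt0 //; lra.
rewrite /sing_factor expRM_natl -exprVn.
have pow_le : (1 - (p%:R : R)^-1)^-1 ^+ k <= expR (2 / p%:R) ^+ k.
  by apply: lerXn2r; rewrite ?nnegrE ?expR_ge0 // invr_ge0 ltW.
apply: le_trans pow_le; apply: ler_piMl; first by rewrite exprn_ge0 // invr_ge0 ltW.
by rewrite lerBlDr lerDl divr_ge0.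
Qed.

Lemma singular_series_cvg_le :
  cvgn (sing_partial R H) /\ singular_series R H <= sing_partial R H D.+1.
Proof.
apply: nonincreasing_from_cvgn_le => [n D_lt | n].
  rewrite sing_partialS; case: ifP => [p_pr | _]; last by rewrite mulr1.
  rewrite ger_pMr; first by rewrite sing_factor_le1 // gtnNdvd ?diff_prod_gt0.
  by rewrite sing_partialE prodr_gt0 // => p; apply: sing_factor_gt0.
by rewrite sing_partialE prodr_ge0 // => p /sing_factor_gt0 /ltW.
Qed.

Lemma sing_partial_le_expR : sing_partial R H D.+1 <=
  expR (2 * k%:R * \sum_(0 <= p < D.+1 | prime p && (p %| D)%N) (p%:R : R)^-1).
Proof.
rewrite sing_partialE mulr_sumr expR_sum.
apply: (@le_trans _ _ (\prod_(0 <= p < D.+1 | prime p)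
    (if (p %| D)%N then expR (k%:R * (2 / p%:R)) else 1))).
  apply: ler_prod => p p_pr; rewrite ltW ?sing_factor_gt0 //=.
  by case: ifP => [_ | /negbT]; [exact: sing_factor_le_expR | exact: sing_factor_le1].
rewrite -big_mkcondr; apply: ler_prod => p _.
by rewrite expR_ge0 ler_expR mulrA (mulrC k%:R) /=.
Qed.

Lemma singular_series_le_cutoff : singular_series R H <=
  expR (2 * k%:R * (3 - 2 * ln (ln (2 : R)))) * ln (cutoff D)%:R ^+ (4 * k).
Proof.
have lnL_gt0 : (0 : R) < ln (cutoff D)%:R by rewrite ln_gt0 // ltr1n.
apply: le_trans (proj2 singular_series_cvg_le) _.
apply: le_trans sing_partial_le_expR _.
rewrite -[X in _ <= _ * X ^+ _](lnK lnL_gt0) -expRM_natl -expRD ler_expR natrM.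
have := sum_inv_prime_dvd_le R D.+1 (diff_prod_gt0 H).
have k_ge0 : (0 : R) <= k%:R by [].
nra.
Qed.

End AdmissibleSet.

Section Height.
Variables (R : realType) (h : R) (H : seq int).

Lemma height_ge1 : uniq H -> (2 <= size H)%N ->
  (forall x, x \in H -> (`|x|%:~R : R) <= h) -> 1 <= h.
Proof.
case: H => [|a [|b t]] //= /andP[a_notin _] _ le_h.
have [a0|a_neq0] := eqVneq a 0; last first.
  by apply: le_trans (le_h a _); rewrite ?mem_head // ler1z; lia.
have b_neq0 : b != 0 by apply: contraNneq a_notin => b0; rewrite a0 b0 mem_head.
by apply: le_trans (le_h b _); rewrite ?inE ?eqxx ?orbT // ler1z; lia.
Qed.

Lemma ln_diff_prod_le : 1 <= h -> (forall x, x \in H -> (`|x|%:~R : R) <= h) ->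
  ln ((diff_prod H)%:R : R) <= (size H * size H)%N%:R * ln (10 * h).
Proof.
move=> h_ge1 H_le; have h_gt0 : 0 < h by lra.
apply: (@le_trans _ _ (ln ((2 * h) ^+ (size H * size H)))).
  by rewrite ler_ln ?posrE ?exprn_gt0 ?mulr_gt0 ?ltr0n ?diff_prod_gt0 ?diff_prod_le.
rewrite lnXn ?mulr_gt0 // -[X in X <= _]mulr_natl ler_wpM2l //.
by rewrite ler_ln ?posrE ?mulr_gt0 // ler_wpM2r ?ltW //; lra.
Qed.

Lemma lnln10_le : 1 <= h -> ln (ln (10 : R)) <= ln (ln (10 * h)).
Proof.
move=> h_ge1; have := ln10_gt1 R.
by rewrite ler_ln ?posrE ?ler_ln ?posrE ?mulr_gt0 ?ln_gt0 ?ler_peMr; lra.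
Qed.

Definition ln_cutoff_const (k : nat) : R :=
  ln (2 * (k * k)%N%:R + 4) / ln (ln 10) + 1.

Lemma ln_cutoff_le : 1 <= h -> (forall x, x \in H -> (`|x|%:~R : R) <= h) ->
  ln (cutoff (diff_prod H))%:R <= ln_cutoff_const (size H) * ln (ln (10 * h)).
Proof.
move=> h_ge1 H_le; set kk : R := (size H * size H)%N%:R.
have h_gt0 : 0 < h by lra.
have ln10h_ge : ln 10 <= ln (10 * h) by rewrite ler_ln ?posrE ?mulr_gt0 //; lra.
have ln10h_ge1 : 1 <= ln (10 * h) by have := ln10_gt1 R; lra.
have L_le : (cutoff (diff_prod H))%:R <= (2 * kk + 4) * ln (10 * h).
  have := cutoff_le R (diff_prod_gt0 H); have := ln_diff_prod_le h_ge1 H_le.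
  have -> : (2 * kk + 4) * ln (10 * h) = 2 * (kk * ln (10 * h)) + 4 * ln (10 * h).
    by ring.
  lra.
have kk_ge0 : 0 <= kk by [].
have lnL_le : ln (cutoff (diff_prod H))%:R <= ln (2 * kk + 4) + ln (ln (10 * h)).
  by rewrite -lnM ?posrE ?ler_ln ?posrE ?ltr0n ?mulr_gt0 //; lra.
have lnln_ge := lnln10_le h_ge1.
have lnln10_gt0 : 0 < ln (ln (10 : R)) by rewrite ln_gt0 // ln10_gt1.
have ratio_ge1 : 1 <= ln (ln (10 * h)) / ln (ln 10) by rewrite ler_pdivlMr // mul1r.
apply: le_trans lnL_le _; rewrite /ln_cutoff_const [X in _ <= X]mulrDl mul1r lerD2r.
by rewrite mulrAC -mulrA ler_peMr // ln_ge0 //; lra.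
Qed.

End Height.

Theorem lemma6 (R : realType) (k : nat) : (2 <= k)%N ->
  exists c1 c2 c3 b : R, 0 < c1 /\
    forall (h : R) (H : seq int),
      uniq H -> size H = k -> admissible H ->
      (forall x, x \in H -> (`|x|%:~R : R) <= h) ->
      [/\ c1 <= beta R H,
          beta R H <= c2 * ln (ln (10 * h)),
          cvgn (sing_partial R H) &
          singular_series R H <= c3 * (ln (ln (10 * h))) `^ b].
Proof.
move=> k_ge2; set K := ln_cutoff_const R k; set l0 : R := ln (ln 10).
have l0_gt0 : 0 < l0 by rewrite /l0 ln_gt0 // ln10_gt1.
have /andP[ln2_ge ln2_le] := ln2_bounds R.
exists (ln 2 / 2), (k%:R * (2 * K + l0^-1)),
  (expR (2 * k%:R * (3 - 2 * ln (ln 2))) * K ^+ (4 * k)), (4 * k)%N%:R.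
split=> [|h H H_uniq H_size H_adm H_le]; first lra.
have h_ge1 : 1 <= h by apply: (height_ge1 H_uniq); rewrite ?H_size.
have := ln_cutoff_le h_ge1 H_le; rewrite H_size -/K => lnL_le.
set L := cutoff (diff_prod H) in lnL_le *; set ell := ln (ln (10 * h)) in lnL_le *.
have ell_ge : l0 <= ell := lnln10_le h_ge1.
have lnL_gt0 : 0 < ln (L%:R : R) by rewrite ln_gt0 // ltr1n.
split.
- by apply: beta_ge; rewrite ?H_size.
- apply: le_trans (beta_le_cutoff R H_uniq) _; rewrite H_size -/L -mulrA ler_wpM2l //.
  have ratio_ge1 : 1 <= ell / l0 by rewrite ler_pdivlMr // mul1r.
  rewrite [X in _ <= X]mulrDl -mulrA [l0^-1 * ell]mulrC; lra.
- exact: (singular_series_cvg_le R H_uniq H_adm).1.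
- apply: le_trans (singular_series_le_cutoff R H_uniq H_adm) _.
  rewrite H_size -/L powR_mulrn ?(le_trans (ltW l0_gt0)) //.
  rewrite -[X in _ <= X]mulrA ler_wpM2l ?expR_ge0 //.
  have Kell_ge0 : 0 <= K * ell by apply: le_trans lnL_le; exact: ltW.
  by rewrite -exprMn lerXn2r ?nnegrE ?(ltW lnL_gt0).
Qed.
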